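(* For $1\le j\le d-1$ and $\mathbf r=(r_1,\dots,r_d)\in[1,n]^d$, the right convolution action of $\mathcal H_{\mathscr Y}$ on $\mathcal V$ satisfies $$\{e_{r_1\cdots r_d}\}T_j=\begin{cases}\{e_{r_1\cdots r_{j-1}r_{j+1}r_j\cdots r_d}\}, & r_j<r_{j+1},\\ vt\,\{e_{r_1\cdots r_d}\}, & r_j=r_{j+1},\\ (vt-v^{-1}t)\{e_{r_1\cdots r_d}\}+t^2\{e_{r_1\cdots r_{j-1}r_{j+1}r_j\cdots r_d}\}, & r_j>r_{j+1}.\end{cases}$$
   Context: Fix positive integers $n,d$; $q$ a power of an odd prime; $\mathscr X$ the set of flags $0=V_0\subseteq\cdots\subseteq V_n=\mathbb F_q^d$; $\mathscr Y$ the set of complete flags $0=F_0\subset\cdots\subset F_d=\mathbb F_q^d$; $G=\mathrm{GL}_d(\mathbb F_q)$. $G$-orbits on $\mathscr X\times\mathscr Y$ are indexed by the set $\Pi$ of $n\times d$ matrices over $\mathbb N$ with all column sums $1$ (entry $(i,j)$ of the matrix of $(V,F)$ is $\dim\frac{V_{i-1}+V_i\cap F_j}{V_{i-1}+V_i\cap F_{j-1}}$); $B\in\Pi$ corresponds to $\mathbf r$ with $b_{r_c,c}=1$, and $e_{\mathbf r}$ is the characteristic function of that orbit. $\mathcal A=\mathbb Z[v^{\pm1},t^{\pm1}]$; $\mathcal V$ is the free $\mathcal A$-module spanned by the $e_{\mathbf r}$; $\mathcal H_{\mathscr Y}$ is the $\mathcal A$-algebra of $G$-invariant functions on $\mathscr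 Y\times\mathscr Y$, acting on the right of $\mathcal V$ by convolution $f*h(V,F')=\sum_{F}f(V,F)h(F,F')$ (structure constants are polynomials in $q$, with $q$ replaced by $v^2$). $T_j\in\mathcal H_{\mathscr Y}$ is defined by $T_j(F,F')=v^{-1}t$ if $F_i=F'_i$ for all $i\ne j$ and $F_j\ne F'_j$, and $0$ otherwise. For $B\in\Pi$, $d(B)$ is the dimension of its orbit over $\overline{\mathbb F}_q$, $r(B)$ the dimension of the $G$-orbit of pairs $(V,V)$ with $\dim V_i/V_{i-1}=\sum_jb_{ij}$, and $\{e_{\mathbf r}\}=v^{-(d(B)-r(B))}t^{d(B)-r(B)}e_{\mathbf r}$. *)

From HB Require Import structures.
From mathcomp Require Import all_boot all_order all_algebra.
Set Implicit Arguments. Unset Strict Implicit. Unset Printing Implicit Defensive.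
Import GRing.Theory.
Local Open Scope ring_scope.

Section Flags.
Variables (K : finFieldType) (n d : nat).

(* subspaces of K^d, represented canonically by the square matrix <<A>> *)
Definition subsp := {A : 'M[K]_d | (<<A>>%MS == A)}.

Definition is_flagX (V : {ffun 'I_n.+1 -> subsp}) : bool :=
  [&& val (V ord0) == 0,
      \rank (val (V ord_max)) == d &
      [forall i : 'I_n, (val (V (inord i)) <= val (V (inord i.+1)))%MS]].
Definition flagX := {V : {ffun 'I_n.+1 -> subsp} | is_flagX V}.

Definition is_flagY (F : {ffun 'I_d.+1 -> subsp}) : bool :=
  [&& [forall i : 'I_d.+1, \rank (val (F i)) == i] &
      [forall i : 'I_d, (val (F (inord i)) <= val (F (inord i.+1)))%MS]].
Definition flagY := {F : {ffun 'I_d.+1 -> subsp} | is_flagY F}.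

Definition Vsp (V : flagX) (i : nat) : 'M[K]_d := val (val V (inord i)).
Definition Fsp (F : flagY) (j : nat) : 'M[K]_d := val (val F (inord j)).

(* entry (i+1, j+1) of the matrix of (V,F) (0-based i : 'I_n, j : 'I_d) *)
Definition orbmx (V : flagX) (F : flagY) (i : 'I_n) (j : 'I_d) : nat :=
  (\rank (Vsp V i + (Vsp V i.+1 :&: Fsp F j.+1))%MS
   - \rank (Vsp V i + (Vsp V i.+1 :&: Fsp F j))%MS)%N.

(* r : 'I_d -> 'I_n encodes the paper's r with r_c = val (r c) + 1;
   B(r) has entry (i,j) equal to 1 iff r j = i *)
Definition Bmx (r : 'I_d -> 'I_n) (i : 'I_n) (j : 'I_d) : nat := (r j == i).

(* r(B): dimension of the partial flag variety of type (m_1,...,m_n),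
   m_i = sum_j b_ij *)
Definition rowsum (r : 'I_d -> 'I_n) (i : 'I_n) : nat := (\sum_(j : 'I_d) Bmx r i j)%N.
Definition rdim (r : 'I_d -> 'I_n) : nat :=
  (\sum_(i : 'I_n) \sum_(k : 'I_n) ((i < k) * rowsum r i * rowsum r k))%N.
(* d(B): dimension of the orbit = r(B) + dimension of the fibre over V *)
Definition ddim (r : 'I_d -> 'I_n) : nat :=
  (rdim r + \sum_(i : 'I_n) \sum_(k : 'I_n) \sum_(j : 'I_d) \sum_(l : 'I_d)
     ((k <= i) && (j < l)) * Bmx r i j * Bmx r k l)%N.

Variables (R : comUnitRingType) (v t : R).

Definition e_r (r : 'I_d -> 'I_n) (V : flagX) (F : flagY) : R :=
  if [forall i, forall j, orbmx V F i j == Bmx r i j] then 1 else 0.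

Definition brk (r : 'I_d -> 'I_n) (V : flagX) (F : flagY) : R :=
  v ^- (ddim r - rdim r) * t ^+ (ddim r - rdim r) * e_r r V F.

Definition Tj (j : nat) (F F' : flagY) : R :=
  if [forall i : 'I_d.+1, (val i != j) ==> (val F i == val F' i)]
     && (Fsp F j != Fsp F' j) then v^-1 * t else 0.

Definition conv (f : flagX -> flagY -> R) (h : flagY -> flagY -> R)
  (V : flagX) (F' : flagY) : R := \sum_(F : flagY) f V F * h F F'.

End Flags.

Definition swapr (d n : nat) (a b : 'I_d) (r : 'I_d -> 'I_n) : 'I_d -> 'I_n :=
  fun c => if c == a then r b else if c == b then r a else r c.

(* Only the flags F with F_i = F'_i for i <> j contribute to ({e_r} T_j)(V, F'):
   they are obtained from F' by replacing F'_j with one of the q lines W <> F'_j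
   of the pencil of hyperplanes between F'_(j-1) and F'_(j+1). A rank computation
   shows that column c of the orbit matrix of (V, F) is the unit vector at row m
   iff V_k meets F_c inside F_(c-1) exactly for k <= m, so only the columns j and
   j+1 depend on W, through the conditions V_k :&: W <= F'_(j-1) and
   V_k :&: F'_(j+1) <= W. Writing U_k = F'_(j-1) + V_k :&: F'_(j+1), these read
   ~~ (W <= U_k) and U_k <= W: for each k they hold for every line, for no line,
   or fail resp. hold for the single line U_k, and this special line is the same
   for all k, since the U_k increase. So all non-special lines satisfy the same
   column conditions, the special one the conditions with the two columns
   exchanged, and counting lines gives the multiplicities 1, q and q - 1. The
   normalisation exponent d(B) - r(B) is the number of weak inversions of r,
   which changes by one under the swap exactly when r_j <> r_(j+1). *)

From HB Require Import structures.
From mathcomp Require Import all_boot all_order all_algebra.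
From mathcomp Require Import perm mxabelem zify ring.
Set Implicit Arguments. Unset Strict Implicit. Unset Printing Implicit Defensive.
Import GRing.Theory.
Local Open Scope ring_scope.

Section CodimOne.
Variables (F : fieldType) (m : nat).
Implicit Types (A B C P Q W X Y Z : 'M[F]_m).

Lemma mxrank_adds_codim1 C A B : (A <= B)%MS -> (C <= B)%MS ->
  \rank B = (\rank A).+1 -> \rank (C + A)%MS = (\rank A + ~~ (C <= A)%MS)%N.
Proof.
move=> sAB sCB rB; have sA_CA : (A <= C + A)%MS := addsmxSr C A.
have [sCA | nsCA] /= := boolP (C <= A)%MS.
  by rewrite addn0 (addsmx_idPr sCA).
have ltA : (\rank A < \rank (C + A))%N.
  by rewrite (ltn_leqif (mxrank_leqif_sup sA_CA)) addsmx_sub submx_refl andbT.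
have : (\rank (C + A) <= \rank B)%N by rewrite mxrankS // addsmx_sub sCB.
by rewrite rB; lia.
Qed.

Lemma mxrank_cap_codim1 Z A B : (A <= B)%MS -> \rank B = (\rank A).+1 ->
  \rank (Z :&: B)%MS = (\rank (Z :&: A)%MS + ~~ (Z :&: B <= A)%MS)%N.
Proof.
move=> sAB rB; have := mxrank_sum_cap (Z :&: B)%MS A.
have -> : \rank (Z :&: B :&: A)%MS = \rank (Z :&: A)%MS.
  by rewrite -capmxA; apply/eqmx_rank/eqmxP/cap_eqmx => //; apply/capmx_idPr.
rewrite (mxrank_adds_codim1 sAB (capmxSr Z B) rB); lia.
Qed.

Lemma mxrank_adds_cap_diff X Y A B : (X <= Y)%MS -> (A <= B)%MS ->
  \rank B = (\rank A).+1 ->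
  (\rank (X + Y :&: B)%MS - \rank (X + Y :&: A)%MS)%N =
  (~~ (Y :&: B <= A)%MS - ~~ (X :&: B <= A)%MS)%N.
Proof.
move=> sXY sAB rB.
have capXY C : \rank (X :&: (Y :&: C))%MS = \rank (X :&: C)%MS.
  by rewrite capmxA; apply/eqmx_rank/eqmxP/cap_eqmx => //; apply/capmx_idPl.
have := mxrank_sum_cap X (Y :&: B)%MS; have := mxrank_sum_cap X (Y :&: A)%MS.
rewrite !capXY (mxrank_cap_codim1 Y sAB rB) (mxrank_cap_codim1 X sAB rB).
have XY : (Y :&: B <= A)%MS -> (X :&: B <= A)%MS.
  by apply: submx_trans; apply: capmxS.
by case: (Y :&: B <= A)%MS XY; case: (X :&: B <= A)%MS => /=; lia.
Qed.

Lemma cap_sub_codim1E P W Q Z : (P <= W)%MS -> (W <= Q)%MS ->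
  \rank W = (\rank P).+1 -> (Z :&: W <= P)%MS = ~~ (W <= P + Z :&: Q)%MS.
Proof.
move=> sPW sWQ rW.
have modW : ((P + Z :&: Q) :&: W :=: P + Z :&: W)%MS.
  apply: eqmx_trans (eqmx_sym (matrix_modl _ sPW)) _.
  by apply: adds_eqmx => //; rewrite -capmxA; apply: cap_eqmx => //; apply/capmx_idPr.
have sPZW : (P + Z :&: W <= W)%MS by rewrite addsmx_sub sPW capmxSr.
have -> : (W <= P + Z :&: Q)%MS = (W <= P + Z :&: W)%MS.
  by rewrite -modW sub_capmx submx_refl andbT.
rewrite -(mxrank_leqif_sup sPZW).2 addsmxC.
rewrite (mxrank_adds_codim1 sPW (capmxSr Z W) rW) rW.
by case: (Z :&: W <= P)%MS; rewrite /= ?addn0 ?addn1 ?eqxx // neq_ltn ltnSn.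
Qed.

End CodimOne.

Lemma step_incrementsP (N m : nat) (h : nat -> bool) : h 0 = false ->
  (forall k, (k < N)%N -> h k -> h k.+1) ->
  (forall i, (i < N)%N -> (h i.+1 - h i)%N = (m == i) :> nat) <->
  (forall k, (k <= N)%N -> h k = (m < k)%N).
Proof.
move=> h0 mono; split=> [incr|step i lt_iN].
  elim=> [|k IHk] lt_kN; first by rewrite h0.
  have := incr k lt_kN; have := mono k lt_kN; have := IHk (ltnW lt_kN).
  by case: (h k); case: (h k.+1) => //= -> //=; case: ltngtP => //=; lia.
by rewrite (step _ lt_iN) (step _ (ltnW lt_iN)); case: ltngtP => //=; lia.
Qed.

Section Flags.
Variables (K : finFieldType) (n d : nat).

Lemma Vsp0 (V : flagX K n d) : Vsp V 0 = 0.
Proof.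
have -> : Vsp V 0 = val (val V ord0) by congr (val (val V _)); apply/val_inj/inordK.
by case/and3P: (valP V) => /eqP.
Qed.

Lemma VspS (V : flagX K n d) i : (i < n)%N -> (Vsp V i <= Vsp V i.+1)%MS.
Proof. by move=> lt_in; case/and3P: (valP V) => _ _ /forallP /(_ (Ordinal lt_in)). Qed.

Lemma Vsp_monotone (V : flagX K n d) i k : (i <= k <= n)%N -> (Vsp V i <= Vsp V k)%MS.
Proof.
case/andP; elim: k => [|k IHk]; first by rewrite leqn0 => /eqP ->.
rewrite leq_eqVlt ltnS => /orP [/eqP -> //| le_ik lt_kn].
exact: submx_trans (IHk le_ik (ltnW lt_kn)) (VspS V lt_kn).
Qed.

Lemma Vsp_chain (V : flagX K n d) (k k' : 'I_n.+1) :
  (k <= k')%N -> (Vsp V k <= Vsp V k')%MS.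
Proof. by move=> le_kk'; apply: Vsp_monotone; rewrite le_kk' -ltnS ltn_ord. Qed.

Lemma Fsp_rank (F : flagY K d) i : (i <= d)%N -> \rank (Fsp F i) = i.
Proof.
move=> le_id; case/andP: (valP F) => /forallP /(_ (inord i)) /eqP rFi _.
by rewrite /Fsp rFi inordK.
Qed.

Lemma FspS (F : flagY K d) i : (i < d)%N -> (Fsp F i <= Fsp F i.+1)%MS.
Proof. by move=> lt_id; case/andP: (valP F) => _ /forallP /(_ (Ordinal lt_id)). Qed.

Lemma orbmx_colE (V : flagX K n d) (F : flagY K d) (c : 'I_d) m :
  [forall i : 'I_n, orbmx V F i c == (m == i) :> nat] =
  [forall k : 'I_n.+1, (Vsp V k :&: Fsp F c.+1 <= Fsp F c)%MS == (k <= m)%N].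
Proof.
have sF : (Fsp F c <= Fsp F c.+1)%MS := FspS F (ltn_ord c).
have rF : \rank (Fsp F c.+1) = (\rank (Fsp F c)).+1.
  by rewrite !Fsp_rank // ltnW.
pose h k := ~~ (Vsp V k :&: Fsp F c.+1 <= Fsp F c)%MS.
have h0 : h 0 = false by rewrite /h Vsp0 cap0mx sub0mx.
have mono k : (k < n)%N -> h k -> h k.+1.
  move=> lt_kn; apply: contra; apply: submx_trans.
  exact: capmxS (VspS V lt_kn) (submx_refl _).
have incrE (i : 'I_n) : orbmx V F i c = (h i.+1 - h i)%N.
  exact: mxrank_adds_cap_diff (VspS V (ltn_ord i)) sF rF.
have [toStep toIncr] := step_incrementsP m h0 mono.
apply/forallP/forallP => [incr k | step i].
  rewrite leqNgt -(toStep _ k (ltn_ord k)) ?negbK //.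
  by move=> i lt_in; have /eqP := incr (Ordinal lt_in); rewrite incrE.
rewrite incrE toIncr //= => k le_kn.
by have /eqP /= := step (Ordinal (le_kn : (k < n.+1)%N)); rewrite /h => ->; rewrite -ltnNge.
Qed.

End Flags.

Section Subspaces.
Variables (K : finFieldType) (d : nat).

Definition gensp (A : 'M[K]_d) : subsp K d := exist _ <<A>>%MS (introT eqP (genmx_id A)).

Lemma gensp_eqmx A : (val (gensp A) :=: A)%MS.
Proof. exact: genmxE. Qed.

Lemma eq_subsp (W1 W2 : subsp K d) : (val W1 == val W2)%MS -> W1 = W2.
Proof. by move/genmxP; rewrite (eqP (valP W1)) (eqP (valP W2)); apply: val_inj. Qed.

End Subspaces.

Section Pencil.
Variables (K : finFieldType) (d : nat) (P Q : 'M[K]_d) (p : nat).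
Hypotheses (sPQ : (P <= Q)%MS) (rP : \rank P = p) (rQ : \rank Q = p.+2).

Definition pencil : {set subsp K d} :=
  [set W | [&& \rank (val W) == p.+1, (P <= val W)%MS & (val W <= Q)%MS]].

Lemma pencilP W :
  reflect [/\ \rank (val W) = p.+1, (P <= val W)%MS & (val W <= Q)%MS] (W \in pencil).
Proof. by rewrite inE; apply: (iffP and3P) => -[/eqP]; last move=> ->. Qed.

Lemma gensp_pencil U : (P <= U)%MS -> (U <= Q)%MS -> \rank U = p.+1 ->
  gensp U \in pencil.
Proof. by move=> sPU sUQ rU; apply/pencilP; rewrite !gensp_eqmx. Qed.

Lemma pencil_eq_gensp W U : W \in pencil -> (U <= val W)%MS -> \rank U = p.+1 ->
  W = gensp U.
Proof.
case/pencilP=> rW _ _ sUW rU; apply: eq_subsp.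
have eUW : (U :=: val W)%MS by apply/eqmxP; rewrite -(mxrank_leqif_eq sUW).2 rU rW.
exact/eqmxP/(eqmx_trans (eqmx_sym eUW) (eqmx_sym (gensp_eqmx U))).
Qed.

Lemma pencil_subE W W' : W \in pencil -> W' \in pencil ->
  (val W <= val W')%MS = (W == W').
Proof.
move=> inW inW'; apply/idP/eqP => [sWW' | -> //].
have [rW _ _] := pencilP _ inW.
by rewrite (pencil_eq_gensp inW' sWW' rW) -(pencil_eq_gensp inW (submx_refl _) rW).
Qed.

Lemma pencil_through (x : 'rV[K]_d) : (x <= Q)%MS -> ~~ (x <= P)%MS ->
  (\sum_(W in pencil) (x <= val W)%MS)%N = 1%N.
Proof.
move=> xQ xP; set S := (P + x)%MS.
have rS : \rank S = p.+1.
  have : (\rank P < \rank S)%N.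
    by rewrite (ltn_leqif (mxrank_leqif_sup (addsmxSl P x))) addsmx_sub submx_refl.
  have := (mxrank_adds_leqif P x).1; have := rank_leq_row x; rewrite /S rP; lia.
have inS : gensp S \in pencil by apply: gensp_pencil; rewrite ?addsmxSl ?addsmx_sub ?sPQ.
rewrite (bigD1 _ inS) /= gensp_eqmx addsmxSr big1 // => W /andP [inW nWS].
apply/eqP; rewrite eqb0; apply: contra nWS => xW; apply/eqP/(pencil_eq_gensp inW _ rS).
by rewrite addsmx_sub xW andbT; case/pencilP: inW.
Qed.

Lemma card_pencil : #|pencil| = #|K|.+1.
Proof.
set q := #|K|; set X := rowg Q :\: rowg P.
have cardX : #|X| = (q ^ p.+2 - q ^ p)%N by rewrite cardsDS ?rowgS // !card_rowg rP rQ.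
have cardXW W : W \in pencil -> (\sum_(x in X) (x <= val W)%MS)%N = (q ^ p.+1 - q ^ p)%N.
  case/pencilP=> rW sPW sWQ; rewrite -big_mkcondr sum1dep_card /=.
  have -> : [set x | (x \in X) && (x <= val W)%MS] = rowg (val W) :\: rowg P.
    apply/setP => x; rewrite !inE -andbA; congr (_ && _).
    by rewrite andb_idl // => /submx_trans; apply.
  by rewrite cardsDS ?rowgS // !card_rowg rP rW.
have double_count : (#|X| = #|pencil| * (q ^ p.+1 - q ^ p))%N.
  rewrite -sum1_card -sum_nat_const -(eq_bigr _ cardXW) exchange_big /=.
  by apply: eq_bigr => x; rewrite !inE => /andP [xP xQ]; rewrite pencil_through.
have q_gt1 : (1 < q)%N := card_finNzRing_gt1 K.
have u_gt0 : (0 < q ^ p)%N by rewrite expn_gt0 ltnW.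
move: double_count; rewrite cardX !expnS; move: (q ^ p)%N u_gt0 => u u_gt0.
have -> : (q * (q * u) - u = q.+1 * (q * u - u))%N.
  by rewrite mulnBr !mulSn [(u + _)%N]addnC subnDl.
move/eqP; rewrite eqn_pmul2r; first by move/eqP.
by rewrite subn_gt0 -{1}[u]mul1n ltn_pmul2r.
Qed.

(* For a flag with P, W, Q in consecutive positions, [lower W (V_k)] and
   [upper W (V_k)] are the conditions of [orbmx_colE] for the two columns
   meeting W; [fits W m1 m2] below says that along the chain V_k these two
   columns are the unit vectors at rows m1 and m2. *)
Definition lower (W : subsp K d) (Z : 'M[K]_d) := (Z :&: val W <= P)%MS.
Definition upper (W : subsp K d) (Z : 'M[K]_d) := (Z :&: Q <= val W)%MS.
Definition special (W : subsp K d) (Z : 'M[K]_d) := ~~ lower W Z && upper W Z.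

Lemma pencil_condE W Z : W \in pencil ->
  lower W Z = ~~ (val W <= P + Z :&: Q)%MS /\ upper W Z = (P + Z :&: Q <= val W)%MS.
Proof.
case/pencilP=> rW sPW sWQ; split; first by rewrite /lower (cap_sub_codim1E Z sPW sWQ) // rW rP.
by rewrite /upper addsmx_sub sPW.
Qed.

Lemma special_eqmx L Z : L \in pencil -> special L Z -> (val L :=: P + Z :&: Q)%MS.
Proof.
move=> inL; rewrite /special; have [-> ->] := pencil_condE Z inL.
by rewrite negbK => /andP sLU; apply/eqmxP/andP.
Qed.

Lemma special_condE L W Z : L \in pencil -> W \in pencil -> special L Z ->
  lower W Z = (W != L) /\ upper W Z = (W == L).
Proof.
move=> inL inW /(special_eqmx inL) eL; have [-> ->] := pencil_condE Z inW.
by rewrite -!eL !pencil_subE // eq_sym.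
Qed.

Lemma nonspecial_condE W Z : (forall L, L \in pencil -> ~~ special L Z) ->
  W \in pencil ->
  lower W Z = (\rank (P + Z :&: Q) == p) /\ upper W Z = (\rank (P + Z :&: Q) == p).
Proof.
move=> nsp inW; have [-> ->] := pencil_condE Z inW; have [rW sPW sWQ] := pencilP _ inW.
set U := (P + Z :&: Q)%MS.
have sPU : (P <= U)%MS := addsmxSl P _.
have sUQ : (U <= Q)%MS by rewrite addsmx_sub sPQ capmxSr.
have := mxrankS sPU; have := mxrankS sUQ; rewrite rP rQ.
case: (ltngtP (\rank U) p.+1) => [ltUp1 _ geUp | gtUp1 leUp2 _ | rU _ _].
- have rU : \rank U = p by apply/eqP; rewrite eqn_leq geUp andbT -ltnS.
  have sUP : (U <= P)%MS by rewrite -(mxrank_leqif_sup sPU).2 rP rU.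
  rewrite rU eqxx (submx_trans sUP sPW); split=> //.
  by apply: contraTN isT => /mxrankS; rewrite rW rU ltnn.
- have rU : \rank U = p.+2 by apply/eqP; rewrite eqn_leq leUp2.
  have sQU : (Q <= U)%MS by rewrite -(mxrank_leqif_sup sUQ).2 rQ rU.
  rewrite rU (submx_trans sWQ sQU) gtn_eqF //; split=> //.
  by apply/negbTE; apply: contraTN isT => /mxrankS; rewrite rW rU ltnn.
- have inU := gensp_pencil sPU sUQ rU.
  have := nsp _ inU; rewrite /special; have [-> ->] := pencil_condE Z inU.
  by rewrite !gensp_eqmx !submx_refl.
Qed.

Lemma special_uniq Z Z' L L' : (Z <= Z')%MS -> L \in pencil -> L' \in pencil ->
  special L Z -> special L' Z' -> L = L'.
Proof.
move=> sZZ' inL inL' /(special_eqmx inL) eL /(special_eqmx inL') eL'.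
apply/eqP; rewrite -pencil_subE // eL eL'.
by apply: addsmxS => //; apply: capmxS.
Qed.

Section Chain.
Variables (N : nat) (Z : 'I_N -> 'M[K]_d) (W0 : subsp K d).
Hypotheses (Zmono : forall k k' : 'I_N, (k <= k')%N -> (Z k <= Z k')%MS)
           (W0_in : W0 \in pencil).

Definition fits W m1 m2 :=
  [forall k, lower W (Z k) == (k <= m1)%N] && [forall k, upper W (Z k) == (k <= m2)%N].

Definition nfits m1 m2 := (\sum_(W in pencil :\ W0) fits W m1 m2)%N.

Lemma special_chain_uniq k k' L L' : L \in pencil -> L' \in pencil ->
  special L (Z k) -> special L' (Z k') -> L = L'.
Proof.
move=> inL inL' spL spL'; case: (leqP k k') => [le_kk' | /ltnW le_k'k].
  exact: special_uniq (Zmono le_kk') inL inL' spL spL'.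
exact/esym/(special_uniq (Zmono le_k'k) inL' inL spL' spL).
Qed.

Lemma conds_swap L k0 W k : L \in pencil -> special L (Z k0) -> W \in pencil -> W != L ->
  lower W (Z k) = upper L (Z k) /\ upper W (Z k) = lower L (Z k).
Proof.
move=> inL spL inW nWL.
case: (pickP [pred L' | (L' \in pencil) && special L' (Z k)]) => [L' /andP [inL' spL'] | nsp].
  have eL := special_chain_uniq inL' inL spL' spL; subst L'.
  have [-> ->] := special_condE inL inW spL'; have [-> ->] := special_condE inL inL spL'.
  by rewrite nWL (negbTE nWL) eqxx.
have nsp' L' : L' \in pencil -> ~~ special L' (Z k).
  by move=> inL'; apply/negP => spL'; have := nsp L'; rewrite /= inL' spL'.
by have [-> ->] := nonspecial_condE nsp' inW; have [-> ->] := nonspecial_condE nsp' inL.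
Qed.

Lemma fits_swap L k0 W m1 m2 : L \in pencil -> special L (Z k0) -> W \in pencil ->
  W != L -> fits W m1 m2 = fits L m2 m1.
Proof.
move=> inL spL inW nWL; rewrite /fits andbC.
congr (_ && _); apply: eq_forallb => k;
  by have [eLo eUp] := conds_swap k inL spL inW nWL; rewrite ?eLo ?eUp.
Qed.

Lemma fits_special_lt L k0 m1 m2 : special L (Z k0) -> fits L m1 m2 -> (m1 < m2)%N.
Proof.
case/andP=> /negbTE lo up /andP [/forallP /(_ k0) /eqP e1 /forallP /(_ k0) /eqP e2].
by move: e1 e2; rewrite lo up => /esym /negbT; rewrite -ltnNge => lt1 /esym /(leq_trans lt1).
Qed.

Lemma fits_nonspecial W m1 m2 : (forall k L, L \in pencil -> ~~ special L (Z k)) ->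
  W \in pencil -> fits W m1 m2 = fits W0 m1 m2.
Proof.
move=> nsp inW; rewrite /fits; congr (_ && _); apply: eq_forallb => k;
  have [eLo eUp] := nonspecial_condE (nsp k) inW;
  by have [eLo0 eUp0] := nonspecial_condE (nsp k) W0_in; rewrite ?eLo ?eUp ?eLo0 ?eUp0.
Qed.

Lemma fits_nonspecial_eq m1 m2 : (forall k L, L \in pencil -> ~~ special L (Z k)) ->
  (m1 < N)%N -> (m2 < N)%N -> fits W0 m1 m2 -> m1 = m2.
Proof.
move=> nsp lt_m1N lt_m2N; have lt_mN : (maxn m1 m2 < N)%N by rewrite gtn_max lt_m1N.
case/andP=> /forallP /(_ (Ordinal lt_mN)) /eqP e1 /forallP /(_ (Ordinal lt_mN)) /eqP e2.
move: e1 e2; have [-> ->] := nonspecial_condE (nsp (Ordinal lt_mN)) W0_in.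
by move=> -> /=; rewrite !geq_max !leqnn andbT; case: ltngtP.
Qed.

Lemma card_pencilD1 : #|pencil :\ W0| = #|K|.
Proof. by have := cardsD1 W0 pencil; rewrite W0_in card_pencil add1n => -[]. Qed.

Lemma nfits_nonspecial m1 m2 : (forall k L, L \in pencil -> ~~ special L (Z k)) ->
  nfits m1 m2 = (#|K| * fits W0 m1 m2)%N.
Proof.
move=> nsp; rewrite /nfits -card_pencilD1 -sum_nat_const.
by apply: eq_bigr => W /setD1P [_ inW]; rewrite fits_nonspecial.
Qed.

Lemma nfits_special_W0 k0 m1 m2 : special W0 (Z k0) ->
  nfits m1 m2 = (#|K| * fits W0 m2 m1)%N.
Proof.
move=> spW0; rewrite /nfits -card_pencilD1 -sum_nat_const.
by apply: eq_bigr => W /setD1P [nWW0 inW]; rewrite (fits_swap _ _ W0_in spW0 inW nWW0).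
Qed.

Lemma nfits_special L k0 m1 m2 : L \in pencil -> special L (Z k0) -> W0 != L ->
  nfits m1 m2 = (fits W0 m2 m1 + (#|K| - 1) * fits W0 m1 m2)%N.
Proof.
move=> inL spL nW0L; have inLD1 : L \in pencil :\ W0 by rewrite in_setD1 eq_sym nW0L.
rewrite /nfits (big_setD1 _ inLD1) /= -(fits_swap _ _ inL spL W0_in nW0L).
have -> : (#|K| - 1 = #|pencil :\ W0 :\ L|)%N.
  by rewrite -card_pencilD1 (cardsD1 L) inLD1 add1n subSS subn0.
rewrite -sum_nat_const; congr (_ + _)%N; apply: eq_bigr => W /setD1P [nWL /setD1P [_ inW]].
by rewrite (fits_swap _ _ inL spL inW nWL) (fits_swap _ _ inL spL W0_in nW0L).
Qed.

Lemma nfitsE m1 m2 : (m1 < N)%N -> (m2 < N)%N ->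
  nfits m1 m2 = (if m1 < m2 then fits W0 m2 m1 : nat
                 else if m1 == m2 then #|K| * fits W0 m1 m2
                 else (#|K| - 1) * fits W0 m1 m2 + #|K| * fits W0 m2 m1)%N.
Proof.
move=> lt_m1N lt_m2N.
case: (pickP [pred Lk | (Lk.1 \in pencil) && special Lk.1 (Z Lk.2)]) => [[L k0] | nsp].
  case/andP=> /= inL spL; have h12 := @fits_special_lt _ _ m1 m2 spL.
  have h21 := @fits_special_lt _ _ m2 m1 spL.
  have [eW0L | nW0L] := eqVneq W0 L.
    subst L; rewrite (nfits_special_W0 _ _ spL).
    case: ltngtP => cmp; case: (fits W0 m1 m2) h12; case: (fits W0 m2 m1) h21 => //= h21 h12; lia.
  rewrite (nfits_special _ _ inL spL nW0L) (fits_swap m1 m2 inL spL W0_in nW0L).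
  rewrite (fits_swap m2 m1 inL spL W0_in nW0L).
  case: ltngtP => cmp; case: (fits L m1 m2) h12; case: (fits L m2 m1) h21 => //= h21 h12; lia.
have nsp' k L : L \in pencil -> ~~ special L (Z k).
  by move=> inL; apply/negP => spL; have := nsp (L, k); rewrite /= inL spL.
rewrite (nfits_nonspecial _ _ nsp').
have h12 := fits_nonspecial_eq nsp' lt_m1N lt_m2N.
have h21 := fits_nonspecial_eq nsp' lt_m2N lt_m1N.
case: ltngtP => cmp; case: (fits W0 m1 m2) h12; case: (fits W0 m2 m1) h21 => //= h21 h12; lia.
Qed.

End Chain.
End Pencil.

Definition ninv n d (r : 'I_d -> 'I_n) : nat :=
  (\sum_(j : 'I_d) \sum_(l : 'I_d) ((j < l) && (r l <= r j)))%N.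

Lemma sum_delta m (c : 'I_m) (G : 'I_m -> nat) : (\sum_(i < m) (c == i) * G i)%N = G c.
Proof. by rewrite (bigD1 c) //= eqxx mul1n big1 ?addn0 // => i; rewrite eq_sym => /negbTE ->. Qed.

Lemma ddim_subn_rdim n d (r : 'I_d -> 'I_n) : (ddim r - rdim r)%N = ninv r.
Proof.
rewrite /ddim addKn.
under eq_bigr => i _ do rewrite exchange_big.
rewrite exchange_big.
under eq_bigr => j _ do under eq_bigr => i _ do rewrite exchange_big.
under eq_bigr => j _ do rewrite exchange_big.
apply: eq_bigr => j _; apply: eq_bigr => l _.
under eq_bigr => i _ do under eq_bigr => k _ do
  rewrite /Bmx [X in (X * _)%N]mulnC -mulnA [X in (_ * X)%N]mulnC.
under eq_bigr => i _ do rewrite -big_distrr /= (sum_delta (r l) (fun k => (k <= i)%N && (j < l)%N)).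
by rewrite (sum_delta (r j) (fun i => (r l <= i)%N && (j < l)%N)) andbC.
Qed.

Lemma sum_pair_delta m (x y : 'I_m) (f : 'I_m -> 'I_m -> nat) :
  (\sum_(j < m) \sum_(l < m) ((j == x) && (l == y)) * f j l)%N = f x y.
Proof.
rewrite -[RHS](sum_delta y (f x)) -(sum_delta x (fun j => \sum_(l < m) (y == l) * f j l))%N.
apply: eq_bigr => j _; rewrite big_distrr; apply: eq_bigr => l _ /=.
by rewrite (eq_sym x) (eq_sym y) mulnA; case: (j == x); case: (l == y).
Qed.

Section AdjacentTransposition.
Variables (d : nat) (a b : 'I_d).
Hypothesis hab : b = a.+1 :> nat.

Lemma neq_ab : (a == b) = false.
Proof. by rewrite -val_eqE /= hab ltn_eqF. Qed.

Lemma swaprE n (r : 'I_d -> 'I_n) c : swapr a b r c = r (tperm a b c).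
Proof.
rewrite /swapr; case: tpermP => [-> | -> | /eqP/negbTE -> /eqP/negbTE -> //].
  by rewrite eqxx.
by rewrite eq_sym neq_ab eqxx.
Qed.

Lemma swapr_a n (r : 'I_d -> 'I_n) : swapr a b r a = r b.
Proof. by rewrite swaprE tpermL. Qed.

Lemma swapr_b n (r : 'I_d -> 'I_n) : swapr a b r b = r a.
Proof. by rewrite swaprE tpermR. Qed.

Lemma tperm_ltn j l : ((tperm a b j < tperm a b l) + ((j == a) && (l == b)) =
                       (j < l) + ((j == b) && (l == a)))%N.
Proof.
have vtperm x : tperm a b x = swapr a b id x by rewrite swaprE.
rewrite !vtperm /swapr -!val_eqE.
case: (eqVneq (j : nat) a) => ja; case: (eqVneq (j : nat) b) => jb;
case: (eqVneq (l : nat) a) => la; case: (eqVneq (l : nat) b) => lb;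
by rewrite /= ?ja ?jb ?la ?lb /=; lia.
Qed.

Lemma ninv_swapr n (r : 'I_d -> 'I_n) :
  (ninv (swapr a b r) + (r b <= r a) = ninv r + (r a <= r b))%N.
Proof.
rewrite /ninv (reindex_inj (@perm_inj _ (tperm a b))) /=.
under eq_bigr => j _ do rewrite (reindex_inj (@perm_inj _ (tperm a b))) /=.
under eq_bigr => j _ do under eq_bigr => l _ do rewrite !swaprE !tpermK.
rewrite -(sum_pair_delta a b (fun j l => (r l <= r j)%N)) -(sum_pair_delta b a (fun j l => (r l <= r j)%N)).
rewrite -!big_split; apply: eq_bigr => j _; rewrite -!big_split; apply: eq_bigr => l _ /=.
by case: (r l <= r j)%N; rewrite ?andbT ?andbF ?muln1 ?muln0 ?tperm_ltn.
Qed.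

End AdjacentTransposition.

Section HeckeCoefficients.
Variables (R : comUnitRingType) (v t : R) (q : nat).
Hypotheses (hv : v \is a GRing.unit) (hvq : v ^+ 2 = q%:R) (q_gt0 : (0 < q)%N).

Lemma hecke_coef_lt S (o y : bool) :
  v ^- S * t ^+ S * (v^-1 * t) * (o * y)%:R = v ^- S.+1 * t ^+ S.+1 * (o && y)%:R.
Proof. by rewrite -!exprVn -mulnb !exprS; ring. Qed.

Lemma hecke_coef_eq S (o x : bool) :
  v ^- S * t ^+ S * (v^-1 * t) * (o * (q * x))%:R = v * t * (v ^- S * t ^+ S * (o && x)%:R).
Proof.
rewrite -!exprVn -mulnb !natrM -hvq.
transitivity (v^-1 ^+ S * t ^+ S * t * o%:R * x%:R * ((v^-1 * v) * v)); first ring.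
by rewrite mulVr //; ring.
Qed.

Lemma hecke_coef_gt S (o x y : bool) :
  v ^- S.+1 * t ^+ S.+1 * (v^-1 * t) * (o * ((q - 1) * x + q * y))%:R =
  (v * t - v^-1 * t) * (v ^- S.+1 * t ^+ S.+1 * (o && x)%:R) +
  t ^+ 2 * (v ^- S * t ^+ S * (o && y)%:R).
Proof.
rewrite -!exprVn -!mulnb !natrM natrD !natrM natrB // -hvq !exprS.
transitivity (v^-1 ^+ S * t ^+ S * t ^+ 2 * o%:R *
  (((v^-1 * v) ^+ 2 - v^-1 ^+ 2) * x%:R + (v^-1 * v) ^+ 2 * y%:R)); first ring.
rewrite [RHS](_ : _ = v^-1 ^+ S * t ^+ S * t ^+ 2 * o%:R *
  ((v^-1 * v - v^-1 ^+ 2) * x%:R + y%:R)); last ring.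
by rewrite mulVr //; ring.
Qed.

End HeckeCoefficients.

Section TjAction.
Variables (K : finFieldType) (n d : nat) (a b : 'I_d).
Hypothesis hab : b = a.+1 :> nat.
Variables (F' : flagY K d) (V : flagX K n d).

Local Notation P := (Fsp F' a).
Local Notation Q := (Fsp F' b.+1).
Local Notation lines := (pencil P Q a).
Local Notation Z := (fun k : 'I_n.+1 => Vsp V k).

Definition W0 : subsp K d := val F' (inord b).

Lemma sub_FspQ : (P <= Q)%MS.
Proof. by apply: submx_trans (FspS _ (ltn_ord b)); rewrite hab FspS. Qed.

Lemma rank_FspP : \rank P = a.
Proof. by rewrite Fsp_rank // ltnW. Qed.

Lemma rank_FspQ : \rank Q = a.+2.
Proof. by rewrite Fsp_rank // hab. Qed.

Lemma W0_line : W0 \in lines.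
Proof.
apply/pencilP; rewrite -[val W0]/(Fsp F' b) Fsp_rank; last exact: ltnW.
by split; [rewrite hab | rewrite hab; apply: FspS | apply: FspS].
Qed.

Definition setb_ffun (W : subsp K d) : {ffun 'I_d.+1 -> subsp K d} :=
  [ffun i : 'I_d.+1 => if i == b :> nat then W else val F' i].

Lemma setb_ffunE W k : (k <= d)%N ->
  val (setb_ffun W (inord k)) = if k == b then val W else Fsp F' k.
Proof. by move=> le_kd; rewrite ffunE inordK //; case: ifP. Qed.

Lemma setb_flagE W : is_flagY (setb_ffun W) = (W \in lines).
Proof.
have le_bd : (b <= d)%N := ltnW (ltn_ord b).
have le_ad : (a <= d)%N := ltnW (ltn_ord a).
have le_a1d : (a.+1 <= d)%N := ltn_ord a.
have le_b1d : (b.+1 <= d)%N := ltn_ord b.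
have ab : (a == b :> nat) = false by rewrite hab ltn_eqF.
have bb1 : (b.+1 == b :> nat) = false := gtn_eqF (ltnSn _).
apply/andP/pencilP => [[/forallP rk /forallP mono] | [rW sPW sWQ]].
  have := rk (inord b); have := mono (Ordinal (ltn_ord a)); have := mono (Ordinal (ltn_ord b)).
  by rewrite /= !setb_ffunE ?inordK // -hab eqxx ab bb1 hab => -> -> /eqP.
split; apply/forallP => i.
  rewrite ffunE; have [-> | _] := eqVneq (i : nat) b; first by rewrite rW hab.
  by case/andP: (valP F') => /forallP.
rewrite !setb_ffunE ?(ltnW (ltn_ord i)) //.
have [-> | _] := eqVneq (i : nat) b; first by rewrite bb1.
have [i1b | _] := eqVneq i.+1 b; last exact: FspS.
by have -> : (i : nat) = a by apply/eqP; rewrite -eqSS i1b hab.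
Qed.

Definition setb W : flagY K d := insubd F' (setb_ffun W).

Lemma Fsp_setb W c : W \in lines -> (c <= d)%N ->
  Fsp (setb W) c = if c == b then val W else Fsp F' c.
Proof. by move=> inW le_cd; rewrite /Fsp /setb val_insubd setb_flagE inW setb_ffunE. Qed.

Lemma setb_notin W : W \notin lines -> setb W = F'.
Proof. by move=> nW; apply: val_inj; rewrite /setb val_insubd setb_flagE (negbTE nW). Qed.

Definition agree (F : flagY K d) :=
  [forall i : 'I_d.+1, (val i != b) ==> (val F i == val F' i)].

Lemma agree_Fsp F c : agree F -> (c <= d)%N -> c != b -> Fsp F c = Fsp F' c.
Proof.
move=> /forallP /(_ (inord c)) /= agc le_cd nc.
by move: agc; rewrite inordK // nc /Fsp => /eqP ->.
Qed.

Lemma agree_line F : agree F -> val F (inord b) \in lines.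
Proof.
move=> agF; apply/pencilP; rewrite -[val (val F _)]/(Fsp F b).
have nab : (a != b :> nat) by rewrite hab neq_ltn ltnSn.
have nb1b : (b.+1 != b :> nat) by rewrite neq_ltn ltnSn orbT.
rewrite -(agree_Fsp agF (ltnW (ltn_ord a)) nab) -(agree_Fsp agF (ltn_ord b) nb1b).
by split; [rewrite Fsp_rank ?hab // ltnW | rewrite hab FspS | apply: FspS].
Qed.

Lemma setb_agree F : agree F -> setb (val F (inord b)) = F.
Proof.
move=> agF; apply: val_inj; rewrite /setb val_insubd setb_flagE agree_line //.
apply/ffunP => i; rewrite ffunE; have [ib | nib] := eqVneq (i : nat) b.
  by congr (val F _); rewrite -ib inord_val.
by move: agF => /forallP /(_ i) /implyP /(_ nib) /eqP ->.
Qed.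

Lemma agree_setb W : W \in lines -> agree (setb W).
Proof.
move=> inW; apply/forallP => i; apply/implyP => nib.
by rewrite /setb val_insubd setb_flagE inW ffunE (negbTE nib).
Qed.

Lemma sum_Tj_support (R : nmodType) (g : flagY K d -> R) :
  \sum_(F | agree F && (Fsp F b != Fsp F' b)) g F = \sum_(W in lines :\ W0) g (setb W).
Proof.
rewrite (reindex_onto setb (fun F => val F (inord b))); last by move=> F /andP [/setb_agree].
apply: eq_bigl => W; have [inW | nW] := boolP (W \in lines); last first.
  by rewrite setb_notin // eqxx andbF in_setD1 (negbTE nW) andbF.
rewrite agree_setb // Fsp_setb ?eqxx ?(ltnW (ltn_ord b)) // in_setD1 inW andbT.
have -> : val (setb W) (inord b) = W.
  by apply: val_inj; have := Fsp_setb inW (ltnW (ltn_ord b)); rewrite eqxx.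
by rewrite eqxx andbT.
Qed.

Lemma setb_W0 : setb W0 = F'.
Proof. by apply: setb_agree; apply/forallP => i; rewrite eqxx implybT. Qed.

Definition col_ok (F : flagY K d) (r : 'I_d -> 'I_n) (c : 'I_d) :=
  [forall i : 'I_n, orbmx V F i c == Bmx r i c].
Definition cols_off_ab (F : flagY K d) (r : 'I_d -> 'I_n) :=
  [forall c : 'I_d, (c != a) && (c != b) ==> col_ok F r c].

Lemma orbit_colsE F r : [forall i, forall j, orbmx V F i j == Bmx r i j] =
  [&& col_ok F r a, col_ok F r b & cols_off_ab F r].
Proof.
apply/idP/and3P => [/forallP orb | [oka okb /forallP okc]].
  have ok c : col_ok F r c by apply/forallP => i; exact: (forallP (orb i) c).
  by split=> //; apply/forallP => c; rewrite ok implybT.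
apply/forallP => i; apply/forallP => c.
have [-> | nca] := eqVneq c a; first exact: (forallP oka i).
have [-> | ncb] := eqVneq c b; first exact: (forallP okb i).
by have /implyP /(_ (introT andP (conj nca ncb))) /forallP := okc c.
Qed.

Lemma col_okE F r c : col_ok F r c =
  [forall k : 'I_n.+1, (Vsp V k :&: Fsp F c.+1 <= Fsp F c)%MS == (k <= r c)%N].
Proof. exact: orbmx_colE. Qed.

Lemma col_ok_setb_a W r : W \in lines ->
  col_ok (setb W) r a = [forall k, lower P W (Z k) == (k <= r a)%N].
Proof.
move=> inW; rewrite col_okE !Fsp_setb ?(ltnW (ltn_ord a)) ?(ltn_ord a) // -hab eqxx.
by rewrite hab ltn_eqF.
Qed.

Lemma col_ok_setb_b W r : W \in lines ->
  col_ok (setb W) r b = [forall k, upper Q W (Z k) == (k <= r b)%N].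
Proof.
move=> inW; rewrite col_okE !Fsp_setb ?(ltnW (ltn_ord b)) ?(ltn_ord b) // eqxx.
by rewrite gtn_eqF.
Qed.

Lemma cols_off_ab_setb W r : W \in lines -> cols_off_ab (setb W) r = cols_off_ab F' r.
Proof.
move=> inW; apply: eq_forallb => c; case: (boolP ((c != a) && (c != b))) => //= /andP [nca ncb].
have ncb' : (c == b :> nat) = false by apply/negbTE.
have nc1b : (c.+1 == b :> nat) = false by rewrite hab eqSS; apply/negbTE.
by rewrite !col_okE !Fsp_setb ?ncb' ?nc1b // ?(ltn_ord c) // ltnW.
Qed.

Lemma cols_off_ab_swapr F r : cols_off_ab F (swapr a b r) = cols_off_ab F r.
Proof.
apply: eq_forallb => c; case: (boolP ((c != a) && (c != b))) => //= /andP [nca ncb].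
by rewrite !col_okE /swapr (negbTE nca) (negbTE ncb).
Qed.

Lemma brk_setb (R : comUnitRingType) (v t : R) r W : W \in lines ->
  brk v t r V (setb W) =
  v ^- ninv r * t ^+ ninv r * (cols_off_ab F' r && fits P Q Z W (r a) (r b))%:R.
Proof.
move=> inW; rewrite /brk ddim_subn_rdim /e_r orbit_colsE.
rewrite col_ok_setb_a // col_ok_setb_b // cols_off_ab_setb //.
by rewrite /fits (andbC (cols_off_ab F' r)) -andbA; case: (_ && _).
Qed.

Lemma brk_F' (R : comUnitRingType) (v t : R) r :
  brk v t r V F' =
  v ^- ninv r * t ^+ ninv r * (cols_off_ab F' r && fits P Q Z W0 (r a) (r b))%:R.
Proof. by rewrite -{1}setb_W0 brk_setb // W0_line. Qed.

Lemma brk_F'_swapr (R : comUnitRingType) (v t : R) r :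
  brk v t (swapr a b r) V F' = v ^- ninv (swapr a b r) * t ^+ ninv (swapr a b r) *
    (cols_off_ab F' r && fits P Q Z W0 (r b) (r a))%:R.
Proof. by rewrite brk_F' cols_off_ab_swapr (swapr_a hab) (swapr_b hab). Qed.

Lemma conv_brk_Tj (R : comUnitRingType) (v t : R) r :
  conv (brk v t r) (Tj v t b) V F' = v ^- ninv r * t ^+ ninv r * (v^-1 * t) *
    (cols_off_ab F' r * nfits P Q a Z W0 (r a) (r b))%:R.
Proof.
have brkTj F : brk v t r V F * Tj v t b F F' =
    if agree F && (Fsp F b != Fsp F' b) then brk v t r V F * (v^-1 * t) else 0.
  by rewrite /Tj; case: ifP; rewrite ?mulr0.
rewrite /conv (eq_bigr _ (fun F _ => brkTj F)) -big_mkcond -mulr_suml sum_Tj_support.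
rewrite (eq_bigr _ (fun W inW => brk_setb v t r (setD1P inW).2)) -mulr_sumr.
rewrite -natr_sum big_distrr /= mulrAC; congr (_ * _%:R).
by apply: eq_bigr => W _; rewrite mulnb.
Qed.

End TjAction.

Unset Implicit Arguments.

Theorem mainTheorem5 (K : finFieldType) (n d : nat) (R : comUnitRingType)
  (v t : R) (hq : odd #|K|) (hn : (0 < n)%N) (hd : (0 < d)%N)
  (hv : v \is a GRing.unit) (ht : t \is a GRing.unit)
  (hvq : v ^+ 2 = #|K|%:R)
  (a b : 'I_d) (hab : val b = (val a).+1) (r : 'I_d -> 'I_n)
  (V : flagX K n d) (F' : flagY K d) :
  conv (brk v t r) (Tj v t b) V F' =
  (if (r a < r b)%N then brk v t (swapr a b r) V F'
   else if r a == r b then v * t * brk v t r V F'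
   else (v * t - v^-1 * t) * brk v t r V F'
        + t ^+ 2 * brk v t (swapr a b r) V F').
Proof.
have q_gt0 : (0 < #|K|)%N := ltnW (card_finNzRing_gt1 K).
rewrite (conv_brk_Tj hab) (brk_F'_swapr hab) (brk_F' hab).
rewrite (nfitsE (sub_FspQ hab F') (rank_FspP a F') (rank_FspQ hab F') (Vsp_chain V)
                (W0_line hab F') (leqW (ltn_ord (r a))) (leqW (ltn_ord (r b)))).
have := ninv_swapr hab r; rewrite -[r a == r b]/(r a == r b :> nat).
case: ltngtP => cmp.
- rewrite addn0 addn1 => ->.
  exact: hecke_coef_lt.
- rewrite addn0 addn1 => <-.
  exact: hecke_coef_gt.
- by rewrite -cmp => _; apply: hecke_coef_eq.
Qed.
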